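(* Fix $p\in\mathbb{N}_0$, and let the polynomials $q_{p,\nu}$ and the coefficients $\alpha_{p,\nu},\beta_{p,\nu}$ be defined by the recursive construction described in the context. Then for every integer $\nu\ge1$ with $\nu\le p$, \[ q_{p,\nu-1}^{(\nu)}(\pm1)=\frac{(\pm1)^p}{(-2)^{\nu+1}\,\nu!}\left[\frac{(p+1+\nu)!}{(p+1-\nu)!}\pm\frac{(p+\nu)!}{(p-\nu)!}\right], \] and \[ \alpha_{p,\nu}=\frac{-1}{(-2)^{\nu+1}\,\nu!}\,\frac{(p+1+\nu)!}{(p+1-\nu)!},\qquad \beta_{p,\nu}=\frac{-1}{(-2)^{\nu+1}\,\nu!}\,\frac{(p+\nu)!}{(p-\nu)!}. \]
   Context: $L_j$ denotes the Legendre polynomial of degree $j$ on $(-1,1)$, normalized so that $L_j(1)=1$. The $n$-th primitive of $L_i$ is defined by $\psi_{i,0}:=L_i$ and $\psi_{i,n}(x):=\int_{-1}^x\psi_{i,n-1}(\zeta)\,d\zeta$ for $n\ge1$. Recursive construction: - Set $q_{p,0}:=\tfrac12(L_p+L_{p+1})$. - For $\nu\ge0$, set $q_{p,\nu+1}:=q_{p,\nu}+\alpha_{p,\nu+1}\psi_{p,\nu+1}+\beta_{p,\nu+1}\psi_{p+1,\nu+1}$, where \[ \alpha_{p,\nu+1}:=-\frac{q_{p,\nu}^{(\nu+1)}(1)+(-1)^p q_{p,\nu}^{(\nu+1)}(-1)}{2},\qquad \beta_{p,\nu+1}:=-\frac{q_{p,\nu}^{(\nu+1)}(1)-(-1)^p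 q_{p,\nu}^{(\nu+1)}(-1)}{2}. \] *)

From HB Require Import structures.
From mathcomp Require Import all_boot all_order all_algebra.
Set Implicit Arguments. Unset Strict Implicit. Unset Printing Implicit Defensive.
Import Order.TTheory GRing.Theory Num.Theory.
Local Open Scope ring_scope.

Section Legendre.
Variable R : realFieldType.

(* Legendre polynomial of degree j, via Rodrigues' formula
   L_j = 1/(2^j j!) d^j/dx^j (x^2-1)^j ; this gives L_j(1) = 1. *)
Definition legendre (j : nat) : {poly R} :=
  ((2 ^+ j * j`!%:R)^-1) *: (('X ^+ 2 - 1) ^+ j)^`(j).

Definition antiderL (p : {poly R}) : {poly R} :=
  \poly_(i < (size p).+1) (if i is k.+1 then p`_k / k.+1%:R else 0).

Definition primL (p : {poly R}) : {poly R} :=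
  antiderL p - ((antiderL p).[-1])%:P.

Fixpoint psiL (i n : nat) : {poly R} :=
  match n with
  | 0 => legendre i
  | n'.+1 => primL (psiL i n')
  end.

Definition alpha_of (p : nat) (q : {poly R}) (k : nat) : R :=
  - ((q^`(k)).[1] + (-1) ^+ p * (q^`(k)).[-1]) / 2.
Definition beta_of (p : nat) (q : {poly R}) (k : nat) : R :=
  - ((q^`(k)).[1] - (-1) ^+ p * (q^`(k)).[-1]) / 2.

Fixpoint qseq (p nu : nat) : {poly R} :=
  match nu with
  | 0 => 2^-1 *: (legendre p + legendre p.+1)
  | n.+1 => let q := qseq p n in
            q + alpha_of p q n.+1 *: psiL p n.+1 + beta_of p q n.+1 *: psiL p.+1 n.+1
  end.

(* alpha_{p,nu}, beta_{p,nu} for nu >= 1 (value at nu = 0 is irrelevant) *)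
Definition alphaq (p nu : nat) : R :=
  if nu is n.+1 then alpha_of p (qseq p n) n.+1 else 0.
Definition betaq (p nu : nat) : R :=
  if nu is n.+1 then beta_of p (qseq p n) n.+1 else 0.

End Legendre.

From HB Require Import structures.
From mathcomp Require Import all_boot all_order all_algebra.
From mathcomp Require Import ring zify.
Import Order.TTheory GRing.Theory Num.Theory.
Set Implicit Arguments. Unset Strict Implicit. Unset Printing Implicit Defensive.
Local Open Scope ring_scope.

(* The derivatives of Legendre polynomials at [+-1] are the coefficients
   [a(n,j) = (n+j)! / ((n-j)! 2^j j!)] of the Bessel polynomials [y_n]:
   [L_n^(j)(s) = s^(n+j) a(n,j)] for [s = +-1].  Hence [q_{p,nu-1}^(nu)(+-1)] is a
   convolution of the [alpha_{p,k}], [beta_{p,k}] with [a(p,.)] and [a(p+1,.)].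
   By induction on [nu], [alpha_{p,k} = (-1)^k a(p+1,k) / 2] and
   [beta_{p,k} = (-1)^k a(p,k) / 2], and the convolutions collapse to their last
   term: at [-1] by the symmetry [k <-> nu - k], at [+1] by the identity
   [y_p(-x) y_{p+1}(x) + y_{p+1}(-x) y_p(x) = 2], whose left side does not depend
   on [p] by the recurrence [y_{n+2} = y_n + (2n+3) x y_{n+1}]. *)

Section PolyShift.
Variable R : comNzRingType.
Implicit Types (P : {poly R}) (c s : R).

Lemma derivn_derivn P m n : P^`(m)^`(n) = P^`(m + n).
Proof. by rewrite addnC /derivn iterD. Qed.

Lemma derivn_comp_XaddC P s k :
  (P \Po ('X + s%:P))^`(k) = P^`(k) \Po ('X + s%:P).
Proof.
elim: k => [|k IHk]; first by rewrite !derivn0.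
by rewrite !derivnS IHk deriv_comp derivD derivX derivC addr0 mulr1.
Qed.

Lemma horner_derivn_shift P s k : P^`(k).[s] = (P \Po ('X + s%:P))`_k *+ k`!.
Proof.
have := congr1 (horner^~ 0) (derivn_comp_XaddC P s k).
rewrite /= horner_comp !hornerE => <-.
by rewrite horner_coef0 coef_derivn addn0 ffactnn.
Qed.

Lemma coef_XaddC_exp c n j : (('X + c%:P) ^+ n)`_j = c ^+ (n - j) *+ 'C(n, j).
Proof.
rewrite addrC exprDn coef_sum.
rewrite (eq_bigr (fun i : 'I_n.+1 => if i == j :> nat then c ^+ (n - j) *+ 'C(n, j) else 0)).
  rewrite -big_mkcond (big_ord1_eq _ (fun=> c ^+ (n - j) *+ 'C(n, j))) ltnS.
  by case: leqP => // /bin_small ->.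
move=> i _; rewrite coefMn -rmorphXn coefCM coefXn.
by have [->|_] := eqVneq (i : nat) j; rewrite ?mulr1 ?mulr0 ?mul0rn.
Qed.
End PolyShift.

Section BesselPolynomials.
Variable R : numFieldType.

Lemma natr_fact_neq0 n : n`!%:R != 0 :> R.
Proof. by rewrite pnatr_eq0 -lt0n fact_gt0. Qed.

(* [(n + j) ^_ 2j = (n + j)! / (n - j)!] for [j <= n], and it vanishes for [j > n]. *)
Definition bessel_coef (n j : nat) : R := ((n + j) ^_ j.*2)%:R / (2 ^+ j * j`!%:R).

Lemma bessel_coef0 n : bessel_coef n 0 = 1.
Proof. by rewrite /bessel_coef expr0 mulr1 divr1. Qed.

Lemma bessel_coef_small n j : (n < j)%N -> bessel_coef n j = 0.
Proof. by move=> ltnj; rewrite /bessel_coef ffact_small ?mul0r //; lia. Qed.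

Lemma bessel_coef_fact n j : (j <= n)%N ->
  bessel_coef n j = (n + j)`!%:R / (n - j)`!%:R / (2 ^+ j * j`!%:R).
Proof.
move=> lejn; rewrite /bessel_coef -(ffact_fact (_ : j.*2 <= n + j)%N); last by lia.
have -> : (n + j - j.*2 = n - j)%N by lia.
by rewrite natrM mulfK // natr_fact_neq0.
Qed.

Lemma ffact_bessel_rec n j :
  ((n + j).+3 ^_ j.*2.+2 = (2 * n + 3) * j.+1 * 2 * (n + j).+1 ^_ j.*2
                           + (n + j).+1 ^_ j.*2.+2)%N.
Proof.
rewrite [in LHS]ffactSS ffactSS 2!ffactnSr.
have [lejn|ltnj] := leqP j n.+1; last by rewrite ffact_small; lia.
nia.
Qed.

Lemma bessel_coef_rec n j :
  bessel_coef n.+2 j.+1 = (2 * n + 3)%:R * bessel_coef n.+1 j + bessel_coef n j.+1.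
Proof.
rewrite /bessel_coef !addSn !addnS doubleS ffact_bessel_rec factS.
set F := ((n + j).+1 ^_ j.*2)%N; set G := ((n + j).+1 ^_ j.*2.+2)%N.
rewrite natrD !natrM exprS.
by field; rewrite natr_fact_neq0 nat1r pnatr_eq0 expf_neq0 // pnatr_eq0.
Qed.

(* [bessel_poly s n] is [y_n(s x)], for the Bessel polynomial [y_n = \sum_j bessel_coef n j x^j]. *)
Definition bessel_poly (s : R) n : {poly R} := \poly_(j < n.+1) (s ^+ j * bessel_coef n j).

Lemma coef_bessel_poly s n j : (bessel_poly s n)`_j = s ^+ j * bessel_coef n j.
Proof.
by rewrite coef_poly ltnS; case: leqP => // /bessel_coef_small ->; rewrite mulr0.
Qed.

Lemma bessel_poly0 s : bessel_poly s 0 = 1.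
Proof.
apply/polyP => -[|j]; rewrite coef_bessel_poly coef1 ?bessel_coef0 ?mulr1 //.
by rewrite bessel_coef_small ?mulr0.
Qed.

Lemma bessel_poly1 s : bessel_poly s 1 = 1 + s *: 'X.
Proof.
apply/polyP => -[|[|j]]; rewrite coef_bessel_poly coefD coef1 coefZ coefX /=.
- by rewrite bessel_coef0 expr0 !mulr1 mulr0 addr0.
- by rewrite /bessel_coef /= mulr1 divff ?expr1 ?mulr1 ?add0r // pnatr_eq0.
- by rewrite bessel_coef_small ?mulr0 ?addr0.
Qed.

Lemma bessel_poly_rec s n :
  bessel_poly s n.+2 = bessel_poly s n + ((2 * n + 3)%:R * s) *: ('X * bessel_poly s n.+1).
Proof.
apply/polyP => -[|j]; rewrite coefD coefZ coefXM !coef_bessel_poly /=.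
  by rewrite !bessel_coef0 mulr0 addr0.
by rewrite bessel_coef_rec exprS; ring.
Qed.

Lemma bessel_poly_wronskian n :
  bessel_poly (-1) n * bessel_poly 1 n.+1 + bessel_poly (-1) n.+1 * bessel_poly 1 n = 2%:P.
Proof.
elim: n => [|n IHn].
  by rewrite !bessel_poly0 bessel_poly1 bessel_poly1 scaleN1r scale1r polyC_natr; ring.
rewrite !bessel_poly_rec -IHn -!mul_polyC mulrN1 mulr1 polyCN; ring.
Qed.

Lemma sum_bessel_coef_alt p n :
  \sum_(k < n.+1) (-1) ^+ k *
    (bessel_coef p.+1 k * bessel_coef p (n.+1 - k) + bessel_coef p k * bessel_coef p.+1 (n.+1 - k))
  = (-1) ^+ n * (bessel_coef p.+1 n.+1 + bessel_coef p n.+1).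
Proof.
rewrite -[_ * _ in RHS]opprK; apply/eqP; rewrite -addr_eq0; apply/eqP.
rewrite -[RHS](coefC (2 : R) n.+1) -(bessel_poly_wronskian p) coefD !coefM -big_split.
rewrite [RHS]big_ord_recr /=; congr (_ + _).
  by apply: eq_bigr => k _; rewrite !coef_bessel_poly expr1n; ring.
by rewrite subnn !coef_bessel_poly !bessel_coef0 expr1n exprS; ring.
Qed.

Lemma sum_bessel_coef_antisym p n :
  \sum_(k < n.+1)
    (bessel_coef p.+1 k * bessel_coef p (n.+1 - k) - bessel_coef p k * bessel_coef p.+1 (n.+1 - k))
  = bessel_coef p n.+1 - bessel_coef p.+1 n.+1.
Proof.
have : \sum_(k < n.+2)
    (bessel_coef p.+1 k * bessel_coef p (n.+1 - k) - bessel_coef p k * bessel_coef p.+1 (n.+1 - k))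
  = 0 :> R.
  apply/eqP; rewrite sumrB subr_eq0 (reindex_inj rev_ord_inj); apply/eqP.
  apply: eq_bigr => k _; rewrite /= subSS subKn 1?mulrC //.
  by rewrite -ltnS.
rewrite big_ord_recr /= subnn !bessel_coef0 !mulr1 => /eqP; rewrite addr_eq0 => /eqP ->.
by rewrite opprB.
Qed.

End BesselPolynomials.

Arguments bessel_coef {R} n j.

Section LegendreExpansion.
Variable R : realFieldType.

Lemma horner_legendre_derivn n j (s : R) : s ^+ 2 = 1 ->
  (legendre R n)^`(j).[s] = s ^+ (n + j) * bessel_coef n j.
Proof.
move=> s2; rewrite /legendre -derivnZ derivn_derivn derivnZ hornerZ horner_derivn_shift.
have sq_shift : ('X ^+ 2 - 1) \Po ('X + s%:P) = 'X * ('X + (s *+ 2)%:P).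
  have -> : 'X ^+ 2 - 1 = 'X ^+ 2 - (s ^+ 2)%:P :> {poly R} by rewrite s2.
  by rewrite comp_polyB comp_polyC rmorphXn /= comp_polyX rmorphXn polyCMn /=; ring.
rewrite rmorphXn /= sq_shift exprMn coefXnM ltnNge leq_addr /= addKn coef_XaddC_exp.
have [ltnj|lejn] := ltnP n j.
  by rewrite bin_small // bessel_coef_small // !(mul0rn, mulr0).
rewrite bessel_coef_fact //.
have [r ->] : exists r, n = (j + r)%N by exists (n - j)%N; rewrite subnKC.
have := bin_fact (leq_addr r j); rewrite addKn => /(congr1 (GRing.natmul (1 : R))).
rewrite !natrM => <-.
have -> : s ^+ (j + r + j) = s ^+ r.
  by rewrite addnAC addnn -mul2n exprD exprM s2 expr1n mul1r.
rewrite -mulrnA -[s *+ 2]mulr_natr -[_ *+ (_ * _)%N]mulr_natr natrM exprMn exprD.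
have nz_bin : 'C(j + r, j)%:R != 0 :> R by rewrite pnatr_eq0 -lt0n bin_gt0 leq_addr.
by field; rewrite nz_bin !natr_fact_neq0 !expf_neq0 // pnatr_eq0.
Qed.

Lemma deriv_primL (P : {poly R}) : (primL P)^`() = P.
Proof.
rewrite /primL derivB derivC subr0; apply/polyP => i.
rewrite coef_deriv /antiderL coef_poly ltnS.
case: ltnP => [_|le_size]; last by rewrite mul0rn nth_default.
by rewrite -[LHS]mulr_natr divfK // pnatr_eq0.
Qed.

Lemma derivn_psiL i k m : (k <= m)%N -> (psiL R i k)^`(m) = (legendre R i)^`(m - k).
Proof.
elim: k m => [|k IHk] [|m] le_km; rewrite ?subn0 //.
by rewrite derivSn [psiL _ _ _]/= deriv_primL IHk.
Qed.

Lemma qseqS p n : qseq R p n.+1 =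
  qseq R p n + alphaq R p n.+1 *: psiL R p n.+1 + betaq R p n.+1 *: psiL R p.+1 n.+1.
Proof. by []. Qed.

(* At [k = 0] these are the coefficients [1/2] of [q_{p,0}]. *)
Definition alpha_bessel (p k : nat) : R := (-1) ^+ k / 2 * bessel_coef p.+1 k.
Definition beta_bessel (p k : nat) : R := (-1) ^+ k / 2 * bessel_coef p k.

Definition coefs_bessel_upto (p n : nat) : Prop :=
  forall k, (0 < k <= n)%N -> alphaq R p k = alpha_bessel p k /\ betaq R p k = beta_bessel p k.

Lemma derivn_qseq p n m : (n <= m)%N -> coefs_bessel_upto p n ->
  (qseq R p n)^`(m) = \sum_(k < n.+1)
    (alpha_bessel p k *: (legendre R p)^`(m - k) + beta_bessel p k *: (legendre R p.+1)^`(m - k)).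
Proof.
elim: n => [|n IHn] le_nm coefs.
  rewrite big_ord1 /alpha_bessel /beta_bessel !bessel_coef0 subn0 /= derivnZ derivnD.
  by rewrite expr0 mulr1 div1r scalerDr.
rewrite qseqS; have [-> ->] := coefs n.+1 (leqnn _).
rewrite !derivnD !derivnZ !derivn_psiL // IHn ?(ltnW le_nm) //; last first.
  by move=> k /andP[k_gt0 le_kn]; apply: coefs; rewrite k_gt0 leqW.
by rewrite [RHS]big_ord_recr /= addrA.
Qed.

Lemma horner_derivn_qseq1 p n : coefs_bessel_upto p n ->
  (qseq R p n)^`(n.+1).[1] = (-1) ^+ n / 2 * (bessel_coef p.+1 n.+1 + bessel_coef p n.+1).
Proof.
move=> coefs; rewrite derivn_qseq // horner_sum mulrAC -sum_bessel_coef_alt mulr_suml.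
apply: eq_bigr => k _; rewrite hornerD !hornerZ !horner_legendre_derivn ?expr1n //.
by rewrite /alpha_bessel /beta_bessel; ring.
Qed.

Lemma horner_derivn_qseqN1 p n : coefs_bessel_upto p n ->
  (qseq R p n)^`(n.+1).[-1] = (-1) ^+ (p + n) / 2 * (bessel_coef p.+1 n.+1 - bessel_coef p n.+1).
Proof.
move=> coefs; rewrite derivn_qseq // horner_sum.
rewrite -opprB -sum_bessel_coef_antisym mulrN mulr_sumr -sumrN.
apply: eq_bigr => k _; have le_kn : (k <= n.+1)%N by rewrite ltnW.
have sgn : (-1) ^+ (p + n) = - ((-1) ^+ k * (-1) ^+ (p + (n.+1 - k))) :> R.
  by rewrite -!exprD addnCA subnKC // addnS exprS mulN1r opprK.
rewrite hornerD !hornerZ !horner_legendre_derivn ?sqrrN ?expr1n // addSn exprS sgn.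
by rewrite /alpha_bessel /beta_bessel; ring.
Qed.

Lemma coefs_bessel p n : coefs_bessel_upto p n.
Proof.
elim: n => [|n IHn] k /andP[k_gt0]; first by rewrite leqNgt k_gt0.
rewrite leq_eqVlt ltnS => /orP[/eqP-> | le_kn]; last by apply: IHn; rewrite k_gt0.
rewrite /alphaq /betaq /alpha_of /beta_of horner_derivn_qseq1 // horner_derivn_qseqN1 //.
set d := bessel_coef p.+1 n.+1 - bessel_coef p n.+1.
have -> : (-1) ^+ p * ((-1) ^+ (p + n) / 2 * d) = (-1) ^+ n / 2 * d :> R.
  by rewrite exprD !mulrA -expr2 sqrr_sign mul1r.
rewrite /alpha_bessel /beta_bessel /d exprS.
by split; field.
Qed.

End LegendreExpansion.

Theorem lemma6 (R : realFieldType) (p nu : nat) :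
  (1 <= nu)%N -> (nu <= p)%N ->
  let c : R := ((-2) ^+ nu.+1 * nu`!%:R)^-1 in
  let A : R := (p.+1 + nu)`!%:R / (p.+1 - nu)`!%:R in
  let B : R := (p + nu)`!%:R / (p - nu)`!%:R in
  [/\ ((qseq R p nu.-1)^`(nu)).[1] = c * (A + B),
      ((qseq R p nu.-1)^`(nu)).[-1] = (-1) ^+ p * c * (A - B),
      alphaq R p nu = - c * A
    & betaq R p nu = - c * B].
Proof.
case: nu => // n _ le_np c A B.
have coefs_n := @coefs_bessel R p n.
have [alpha_eq beta_eq] := @coefs_bessel R p n.+1 n.+1 (leqnn _).
rewrite (horner_derivn_qseq1 coefs_n) (horner_derivn_qseqN1 coefs_n) alpha_eq beta_eq.
rewrite /alpha_bessel /beta_bessel !bessel_coef_fact ?leqW // -/A -/B.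
have c_eq : c = (-1) ^+ n / 2 / (2 ^+ n.+1 * (n.+1)`!%:R).
  rewrite /c.
  have -> : (-2) ^+ n.+2 = (-1) ^+ n * 2 ^+ n.+2 :> R.
    by rewrite -mulN1r exprMn !exprS; ring.
  rewrite -[in LHS]mulrA invr_signM exprS.
  by field; rewrite natr_fact_neq0 expf_neq0 // pnatr_eq0.
rewrite c_eq exprD !exprS.
by split; field; rewrite natr_fact_neq0 expf_neq0 // pnatr_eq0.
Qed.
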